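(* Let $\mathcal{F}$ be a flag of type $(ms_1,\dots,ms_r)$ on $\mathbb{F}_{q^n}$ with best friend $\mathbb{F}_{q^m}$, and let $\beta\in\mathbb{F}_{q^n}^\ast\setminus\mathbb{F}_{q^m}^\ast$. If $d_f(\mathrm{Orb}_\beta(\mathcal{F}))=2m$, then $\gcd(s_j,n/m)\neq 1$ for at least $r-1$ indices $j\in\{1,\dots,r\}$.
   Context: $q$ is a prime power and $\mathbb{F}_{q^n}$ is regarded as an $n$-dimensional $\mathbb{F}_q$-vector space; all subspaces are $\mathbb{F}_q$-subspaces. The subspace distance is $d_S(\mathcal{U},\mathcal{V})=\dim(\mathcal{U}+\mathcal{V})-\dim(\mathcal{U}\cap\mathcal{V})$. A flag $\mathcal{F}=(\mathcal{F}_1,\dots,\mathcal{F}_r)$ on $\mathbb{F}_{q^n}$ is a sequence of subspaces $\{0\}\subsetneq\mathcal{F}_1\subsetneq\cdots\subsetneq\mathcal{F}_r\subsetneq\mathbb{F}_{q^n}$; its type is $(\dim\mathcal{F}_1,\dots,\dim\mathcal{F}_r)$. The flag distance is $d_f(\mathcal{F},\mathcal{F}')=\sum_i d_S(\mathcal{F}_i,\mathcal{F}'_i)$; the minimum distance of a flag code is the minimum flag distance between distinct codewords ($0$ if the code has one element). For $\beta\in\mathbb{F}_{q^n}^\ast$, $\mathcal{F}\beta=(\mathcal{F}_1\beta,\dots,\mathcal{F}_r\beta)$ and $\mathrm{Orb}_\beta(\mathcal{F})=\{\mathcal{F}\beta^j: j\ge 0\}$. A subfield $\mathbb{F}_{q^m}$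 is a friend of a subspace $\mathcal{U}$ if $\mathcal{U}$ is an $\mathbb{F}_{q^m}$-vector space; the best friend is the largest friend. A friend of a flag is a common friend of all its subspaces; the best friend of a flag is its largest friend. *)

(* F = F_q (any finite field), L = F_{q^n} as a finite
   field extension of F; subspaces are F-subspaces {vspace L};
   subfields F_{q^m} of F_{q^n} are the F-subfields {subfield L}. *)
From HB Require Import structures.
From mathcomp Require Import all_boot all_order all_algebra all_field.
Set Implicit Arguments. Unset Strict Implicit. Unset Printing Implicit Defensive.
Import GRing.Theory.
Local Open Scope ring_scope.

Section FlagDefs.
Variables (F : finFieldType) (L : fieldExtType F).

Definition subspace_dist (U V : {vspace L}) : nat :=
  (\dim (U + V) - \dim (U :&: V))%N.

Definition is_flag (fl : seq {vspace L}) : bool :=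
  [&& all (fun U => U != 0%VS) fl, all (fun U => U != fullv) fl &
      sorted (fun U V => (U <= V)%VS && (U != V)) fl].

Definition flag_dist (fl fl' : seq {vspace L}) : nat :=
  \sum_(i < size fl) subspace_dist (nth 0%VS fl i) (nth 0%VS fl' i).

(* K is a friend of U : U is a K-vector space *)
Definition friend (K : {subfield L}) (U : {vspace L}) : bool :=
  (K * U <= U)%VS.

Definition flag_friend (K : {subfield L}) (fl : seq {vspace L}) : bool :=
  all (friend K) fl.

Definition flag_best_friend (K : {subfield L}) (fl : seq {vspace L}) : Prop :=
  flag_friend K fl /\ forall K' : {subfield L}, flag_friend K' fl -> (K' <= K)%VS.

Definition vmul (U : {vspace L}) (b : L) : {vspace L} := (U * <[b]>)%VS.
Definition flag_mul (fl : seq {vspace L}) (b : L) : seq {vspace L} :=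
  map (fun U => vmul U b) fl.

Definition orb_elt (fl : seq {vspace L}) (b : L) (j : nat) := flag_mul fl (b ^+ j).

Definition orbit_min_dist (fl : seq {vspace L}) (b : L) (d : nat) : Prop :=
  ((exists i j, orb_elt fl b i <> orb_elt fl b j /\
                flag_dist (orb_elt fl b i) (orb_elt fl b j) = d) /\
   (forall i j, orb_elt fl b i <> orb_elt fl b j ->
                (d <= flag_dist (orb_elt fl b i) (orb_elt fl b j))%N))
  \/ ((forall i j, orb_elt fl b i = orb_elt fl b j) /\ d = 0%N).

End FlagDefs.

From HB Require Import structures.
From mathcomp Require Import all_boot all_order all_algebra all_field.
From mathcomp Require Import zify.
Set Implicit Arguments. Unset Strict Implicit. Unset Printing Implicit Defensive.
Import GRing.Theory.
Local Open Scope ring_scope.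

(* Let [F beta^i] and [F beta^j] be distinct codewords at distance [2m] and
   put [g = beta^j / beta^i].  Every component of both flags is an [F_{q^m}]-space,
   and two distinct [F_{q^m}]-spaces of equal dimension are at subspace
   distance at least [2m]; so all components but one satisfy
   [F_k beta^i = F_k beta^j], i.e. [F_k g = F_k].  Such an [F_k] is a module
   over the field [K(g)], which is strictly larger than [K] because the two
   codewords differ.  Hence [t = [K(g) : K] > 1] divides both [s_k] and
   [n/m], so [gcd(s_k, n/m) <> 1] for all these indices. *)

Lemma count_all_but_one (T : Type) (p : pred T) (x0 : T) (s : seq T) (k0 : nat) :
  (forall k, (k < size s)%N -> k != k0 -> p (nth x0 s k)) ->
  (size s - 1 <= count p s)%N.
Proof.
elim: s k0 => [//|x s IH] [|k0] ps /=.
  have : all p s by apply/(all_nthP x0) => k ks; exact: (ps k.+1).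
  by rewrite all_count => /eqP ->; lia.
have px : p x by exact: (ps 0%N).
have := IH k0 (fun k ks => ps k.+1 ks); rewrite px /=; lia.
Qed.

Lemma sum_gap_all_but_one (n c : nat) (d : nat -> nat) :
  (0 < c)%N -> (\sum_(k < n) d k)%N = c ->
  (forall k, (k < n)%N -> d k = 0%N \/ (c <= d k)%N) ->
  exists k0, forall k, (k < n)%N -> k != k0 -> d k = 0%N.
Proof.
move=> c_gt0 sum_d gap.
have [k0 dk0 | d0] := pickP (fun k : 'I_n => d k != 0%N); last first.
  by exists 0%N => k kn _; apply/eqP/negbFE/(d0 (Ordinal kn)).
exists (val k0) => k kn kk0; apply/eqP/negPn/negP => dk.
have k_neq : Ordinal kn != k0 by apply: contra kk0 => /eqP <-.
move: sum_d; rewrite (bigD1 k0) //= (bigD1 (Ordinal kn)) //=.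
have := gap k0 (ltn_ord k0); have := gap k kn.
move: dk0 dk => /eqP dk0 /eqP dk /=; lia.
Qed.

Section VspaceMul.
Variables (F : finFieldType) (L : fieldExtType F).
Implicit Types (K : {subfield L}) (U V W : {vspace L}) (a b c g : L).

Lemma dim_vmul U c : c != 0 -> \dim (vmul U c) = \dim U.
Proof. by move=> c0; rewrite dim_cosetv_unit ?unitfE. Qed.

Lemma vmulM U a b : vmul (vmul U a) b = vmul U (a * b).
Proof. by rewrite /vmul -prodvA prodv_line. Qed.

Lemma vmulK c : c != 0 -> cancel (fun U => vmul U c) (fun U => vmul U c^-1).
Proof. by move=> c0 U; rewrite vmulM mulfV // /vmul prodv1. Qed.

Lemma vmul_inj c : c != 0 -> injective (fun U => vmul U c).
Proof. by move/vmulK/can_inj. Qed.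

Lemma friend_vmul K U c : friend K U -> friend K (vmul U c).
Proof. by rewrite /friend /vmul prodvA; apply: prodvSl. Qed.

Lemma friend_cap K V W : friend K V -> friend K W -> friend K (V :&: W).
Proof.
move=> KV KW; rewrite /friend subv_cap.
by rewrite (subv_trans (prodvSr _ (capvSl V W))) ?(subv_trans (prodvSr _ (capvSr V W))).
Qed.

Lemma vmul_friend_id K U c : friend K U -> c \in K -> c != 0 -> vmul U c = U.
Proof.
move=> KU cK c0; apply/eqP; rewrite eqEdim dim_vmul // leqnn andbT.
by rewrite /vmul prodvC (subv_trans _ KU) // prodvSl // -memvE.
Qed.

Lemma vmul_eq_div U a b : a != 0 -> vmul U a = vmul U b -> vmul U (b / a) = U.
Proof. by move=> a0 eq_ab; apply: (vmul_inj a0); rewrite /= vmulM divfK. Qed.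

Lemma subspace_dist_friend_gap K V W :
  friend K V -> friend K W -> \dim V = \dim W ->
  V = W \/ (2 * \dim K <= subspace_dist V W)%N.
Proof.
move=> KV KW dVW; rewrite /subspace_dist.
have K_gt0 := adim_gt0 K.
have sum_cap := dimv_sum_cap V W.
have cap_le : (\dim (V :&: W) <= \dim V)%N := dimvS (capvSl V W).
have [eq_cap | neq_cap] := eqVneq (\dim (V :&: W)) (\dim V).
  have capV : (V :&: W = V)%VS by apply/eqP; rewrite eqEdim capvSl eq_cap leqnn.
  have capW : (V :&: W = W)%VS by apply/eqP; rewrite eqEdim capvSr eq_cap dVW leqnn.
  by left; rewrite -capV capW.
right; have /dvdnP [y ey] := field_module_dimS (friend_cap KV KW).
have /dvdnP [x ex] := field_module_dimS KV.
have yx : (y < x)%N by rewrite -(ltn_pmul2r K_gt0) -ey -ex ltn_neqAle neq_cap cap_le.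
move: sum_cap (leq_mul yx (leqnn (\dim K))); rewrite -dVW ey ex mulSn.
set z := \dim (V + W); set k := \dim K; nia.
Qed.

Lemma friend_adjoin K U g : friend K U -> vmul U g = U -> friend <<K; g>>%AS U.
Proof.
move=> KU gU.
have gi i : (U * <[g ^+ i]> <= U)%VS.
  elim: i => [|i IH]; first by rewrite expr0 prodv1.
  by rewrite exprSr -prodv_line prodvA (subv_trans (prodvSl _ IH)) // -[X in (_ <= X)%VS]gU.
rewrite /friend /= Fadjoin_eq_sum /Fadjoin_sum big_distrl /=; apply/subv_sumP => i _.
by rewrite -prodvA (prodvC <[g ^+ i]>%VS) (subv_trans _ KU) // prodvSr.
Qed.

Lemma adjoin_degree_dvd_dim K U g :
  friend K U -> vmul U g = U -> (adjoin_degree K g * \dim K %| \dim U)%N.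
Proof. by move=> KU gU; rewrite -dim_Fadjoin; apply/field_module_dimS/friend_adjoin. Qed.

Lemma adjoin_degree_dvd_degree K g :
  (adjoin_degree K g %| \dim (fullv : {vspace L}) %/ \dim K)%N.
Proof.
by rewrite dvdn_divRL ?field_dimS ?subvf // -dim_Fadjoin field_dimS ?subvf.
Qed.

Lemma flag_mul_friend_eq K fl a b :
  flag_friend K fl -> a != 0 -> b != 0 -> b / a \in K ->
  flag_mul fl a = flag_mul fl b.
Proof.
move=> Kfl a0 b0 baK; apply/eq_in_map => U /(allP Kfl) KU /=.
have ba0 : b / a != 0 by rewrite mulf_neq0 ?invr_eq0.
by rewrite -(divfK a0 b) -vmulM (vmul_friend_id KU baK ba0).
Qed.

Lemma flag_mul_dist_gap K fl a b :
  flag_friend K fl -> a != 0 -> b != 0 ->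
  flag_dist (flag_mul fl a) (flag_mul fl b) = (2 * \dim K)%N ->
  exists k0, forall k, (k < size fl)%N -> k != k0 ->
    vmul (nth 0%VS fl k) (b / a) = nth 0%VS fl k.
Proof.
move=> Kfl a0 b0 dist_ab.
pose d k := subspace_dist (vmul (nth 0%VS fl k) a) (vmul (nth 0%VS fl k) b).
have gap k : (k < size fl)%N ->
    vmul (nth 0%VS fl k) a = vmul (nth 0%VS fl k) b \/ (2 * \dim K <= d k)%N.
  move=> kfl; have KU := all_nthP 0%VS Kfl k kfl.
  by apply: subspace_dist_friend_gap; rewrite ?friend_vmul ?dim_vmul.
have sum_d : (\sum_(k < size fl) d k)%N = (2 * \dim K)%N.
  rewrite -dist_ab /flag_dist /flag_mul size_map; apply: eq_bigr => k _.
  by rewrite !(nth_map 0%VS).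
have d_gap k : (k < size fl)%N -> d k = 0%N \/ (2 * \dim K <= d k)%N.
  move=> kfl; have [eq_ab | ] := gap k kfl; last by right.
  by left; rewrite /d eq_ab /subspace_dist capvv addvv subnn.
have [|k0 dk0] := sum_gap_all_but_one _ sum_d d_gap; first by rewrite muln_gt0 adim_gt0.
exists k0 => k kfl kk0; apply: vmul_eq_div => //.
have [//|] := gap k kfl; rewrite (dk0 k kfl kk0); have := adim_gt0 K; lia.
Qed.

End VspaceMul.

Theorem mainTheorem2 (F : finFieldType) (L : fieldExtType F)
    (fl : seq {vspace L}) (K : {subfield L}) (m : nat) (s : seq nat) (beta : L) :
  is_flag fl ->
  size s = size fl ->
  (forall j, (j < size fl)%N -> \dim (nth 0%VS fl j) = (m * nth 0%N s j)%N) ->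
  flag_best_friend K fl ->
  \dim K = m ->
  beta != 0 -> beta \notin K ->
  orbit_min_dist fl beta (2 * m) ->
  (size fl - 1 <= count (fun sj => gcdn sj (\dim (fullv : {vspace L}) %/ m) != 1%N) s)%N.
Proof.
move=> _ size_s dim_fl [Kfl _] dimK beta0 _ min_dist.
have m_gt0 : (0 < m)%N by rewrite -dimK adim_gt0.
case: min_dist => [[[i [j [neq_ij dist_ij]]] _] | [_ m0]]; last by lia.
have a0 : beta ^+ i != 0 by rewrite expf_neq0.
have b0 : beta ^+ j != 0 by rewrite expf_neq0.
rewrite -dimK in dist_ij.
have [k0 stab] := flag_mul_dist_gap Kfl a0 b0 dist_ij.
set g := beta ^+ j / beta ^+ i in stab.
have gK : g \notin K by apply/negP => /(flag_mul_friend_eq Kfl a0 b0); exact: neq_ij.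
have t_neq1 : adjoin_degree K g != 1%N by rewrite adjoin_deg_eq1.
rewrite -size_s; apply: (count_all_but_one (x0 := 0%N) (k0 := k0)) => k ks kk0.
rewrite size_s in ks.
have t_dvd_s : (adjoin_degree K g %| nth 0%N s k)%N.
  have := adjoin_degree_dvd_dim (all_nthP 0%VS Kfl k ks) (stab k ks kk0).
  by rewrite dim_fl // dimK mulnC dvdn_pmul2l.
have t_dvd_n := adjoin_degree_dvd_degree K g; rewrite dimK in t_dvd_n.
apply: contra t_neq1 => /eqP gcd1.
by rewrite -dvdn1 -gcd1 dvdn_gcd t_dvd_s t_dvd_n.
Qed.
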